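(* Let $\mathbf{A}\in\mathbb{R}^{r\times n}$ be a matrix whose nonzero entries are bounded in absolute value by $\mathrm{poly}(r)$ and all of whose subdeterminants are either zero or at least $\frac{1}{\mathrm{poly}(r)}$ in absolute value. Let $s\ge1$. Then there is a matrix $\mathbf{A}'\in\mathbb{R}^{r\times n}$, obtained from $\mathbf{A}$ by zeroing out at most $O(r^2s\log(nr))$ columns, such that every column of $\mathbf{A}'$ has leverage score at most $\frac1s$.
   Context: The leverage score of column $\mathbf{a}_i$ of a matrix $\mathbf{M}$ is $\ell_i=\max_{\mathbf{v}:\mathbf{M}^\top\mathbf{v}\neq0}\frac{\langle\mathbf{v},\mathbf{a}_i\rangle^2}{\|\mathbf{M}^\top\mathbf{v}\|_2^2}$ (equivalently $\mathbf{a}_i^\top(\mathbf{M}\mathbf{M}^\top)^{+}\mathbf{a}_i$). *)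

From HB Require Import structures.
From mathcomp Require Import all_boot all_order all_algebra.
From mathcomp Require Import classical_sets reals exp.
Set Implicit Arguments. Unset Strict Implicit. Unset Printing Implicit Defensive.
Import Order.TTheory GRing.Theory Num.Theory.
Local Open Scope ring_scope.

(* Leverage score of column i of M (paper's definition):
   l_i = max_{v : M^T v <> 0} <v, a_i>^2 / ||M^T v||_2^2,
   rendered as the supremum of that set of ratios (the max is attained). *)
Definition leverage_score (R : realType) (r n : nat) (M : 'M[R]_(r, n))
    (i : 'I_n) : R :=
  reals.sup [set x : R | exists v : 'cV[R]_r,
      M^T *m v != 0 /\
      x = ((v^T *m col i M) 0 0) ^+ 2 / (((M^T *m v)^T *m (M^T *m v)) 0 0)]%classic.

Definition zero_cols (R : realType) (r n : nat) (A : 'M[R]_(r, n))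
    (S : {set 'I_n}) : 'M[R]_(r, n) :=
  \matrix_(i, j) (if j \in S then 0 else A i j).

Definition subdet (R : realType) (r n k : nat) (A : 'M[R]_(r, n))
    (f : 'I_k -> 'I_r) (g : 'I_k -> 'I_n) : R :=
  \det (mxsub f g A).

(* Let M = zero_cols A S have rank k and let B be k rows of M
   that are linearly independent; the potential is det (B B^T).  If column j of M
   has leverage above 1/s, then, because the rows of M lie in the row space of B,
   Cauchy-Schwarz gives a^T (B B^T)^-1 a > 1/s for the j-th column a of B, and by
   the matrix determinant lemma zeroing column j multiplies the potential by
   1 - a^T (B B^T)^-1 a < 1 - 1/s.  With P = K r^K, the potential is at most
   r! (n P^2)^r by the entry bound, and at least 1/P^2 as long as B keeps full row
   rank, since det (B B^T) dominates the square of every nonsingular k x k minor of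
   B, which is a subdeterminant of A.  Hence after N ~ (4K+1) s r (1 + ln (n r))
   zeroings B loses full row rank, which forces the rank of M to drop; this happens
   at most r times, so at most r N columns are zeroed. *)

From mathcomp Require Import all_boot all_order all_algebra.
From mathcomp Require Import classical_sets reals exp boolp sequences.
From mathcomp Require Import ring lra.
From mathcomp Require Import perm.
Set Implicit Arguments. Unset Strict Implicit. Unset Printing Implicit Defensive.
Import Order.TTheory GRing.Theory Num.Theory.
Local Open Scope ring_scope.

(* Both block products below equal [[1, u], [-v^T, 1]]. *)
Lemma det1_add_outer (R : comNzRingType) k (u v : 'cV[R]_k) :
  \det (1%:M + u *m v^T) = 1 + (v^T *m u) 0 0.
Proof.
have E1 : block_mx (1%:M + u *m v^T) u 0 1%:M *m block_mx 1%:M 0 (- v^T) 1%:M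
        = block_mx 1%:M u (- v^T) (1%:M : 'M_1).
  rewrite mulmx_block ?mulmx1 ?mul1mx ?mulmx0 ?mul0mx ?add0r ?addr0.
  by rewrite mulmxN addrK.
have E2 : block_mx 1%:M 0 (- v^T) 1%:M *m block_mx 1%:M u 0 (1%:M + v^T *m u)
        = block_mx 1%:M u (- v^T) (1%:M : 'M_1).
  rewrite mulmx_block ?mulmx1 ?mul1mx ?mulmx0 ?mul0mx ?add0r ?addr0.
  by rewrite mulNmx addrCA addNr addr0.
have := congr1 determinant (etrans E1 (esym E2)).
rewrite !det_mulmx det_ublock det_lblock det_ublock !det1 !mulr1 !mul1r.
by move->; rewrite det_mx11 !mxE eqxx mulr1n.
Qed.

Lemma det_add_outer (R : fieldType) k (G : 'M[R]_k) (c d : 'cV[R]_k) :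
  G \in unitmx -> \det (G + c *m d^T) = \det G * (1 + (d^T *m invmx G *m c) 0 0).
Proof.
move=> uG; have -> : G + c *m d^T = G *m (1%:M + (invmx G *m c) *m d^T).
  by rewrite mulmxDr mulmx1 !mulmxA mulmxV // mul1mx.
by rewrite det_mulmx det1_add_outer mulmxA.
Qed.

Lemma submx_rowsub_row_free (R : fieldType) m n k (M : 'M[R]_(m, n)) (I : 'I_k -> 'I_m) :
  (\rank M <= k)%N -> row_free (rowsub I M) -> (M <= rowsub I M)%MS.
Proof.
move=> rMk /eqP rI; have sIM : (rowsub I M <= M)%MS by rewrite rowsubE submxMl.
by rewrite -(mxrank_leqif_sup sIM).2 rI eqn_leq rMk -{1}rI mxrankS.
Qed.

Lemma rank_rowsub_not_free (R : fieldType) m n p k (M : 'M[R]_(m, n)) (Z : 'M_(n, p))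
    (I : 'I_k -> 'I_m) :
  (M <= rowsub I M)%MS -> ~~ row_free (rowsub I (M *m Z)) -> (\rank (M *m Z) < k)%N.
Proof.
move=> /submxP[X defM] notfree; rewrite defM -mulmxA mul_rowsub_mx.
by apply: leq_ltn_trans (mxrankM_maxr _ _) _; rewrite ltn_neqAle notfree rank_leq_row.
Qed.

Lemma row_free_colsub_unit (R : fieldType) k n (B : 'M[R]_(k, n)) :
  row_free B -> exists2 J : 'I_k -> 'I_n, injective J & colsub J B \in unitmx.
Proof.
move=> freeB; have fullBt : row_full B^T by rewrite /row_full mxrank_tr.
exists (fullrankfun fullBt); first exact: fullrankfun_inj.
by rewrite -unitmx_tr trmx_mxsub fullrowsub_unit.
Qed.

Lemma dotmxE (R : comNzRingType) n (p q : 'cV[R]_n) :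
  (p^T *m q) 0 0 = \sum_i p i 0 * q i 0.
Proof. by rewrite mxE; apply: eq_bigr => i _; rewrite mxE. Qed.

Lemma dotmx_ge0 (R : realDomainType) n (p : 'cV[R]_n) : 0 <= (p^T *m p) 0 0.
Proof. by rewrite dotmxE sumr_ge0 // => i _; rewrite -expr2 sqr_ge0. Qed.

Lemma cauchy_schwarz_sum (R : realDomainType) n (x y : 'I_n -> R) :
  (\sum_i x i * y i) ^+ 2 <= (\sum_i x i * x i) * (\sum_i y i * y i).
Proof.
have expand i j : (x i * y j - x j * y i) ^+ 2 = x i * x i * (y j * y j)
    + x j * x j * (y i * y i) - x i * y i * (x j * y j) - x i * y i * (x j * y j).
  by ring.
have lagrange : \sum_i \sum_j (x i * y j - x j * y i) ^+ 2
    = 2 * ((\sum_i x i * x i) * (\sum_i y i * y i) - (\sum_i x i * y i) ^+ 2).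
  under eq_bigr => i _ do under eq_bigr => j _ do rewrite expand.
  under eq_bigr do rewrite !sumrB big_split /=.
  rewrite !sumrB big_split /= [X in _ + X - _ - _]exchange_big /=.
  by rewrite expr2 -!big_distrlr /=; ring.
rewrite -subr_ge0 -(pmulr_rge0 _ (ltr0Sn R 1)) -lagrange.
by apply: sumr_ge0 => i _; apply: sumr_ge0 => j _; apply: sqr_ge0.
Qed.

Lemma cauchy_schwarz_mx (R : realDomainType) n (p q : 'cV[R]_n) :
  ((p^T *m q) 0 0) ^+ 2 <= (p^T *m p) 0 0 * (q^T *m q) 0 0.
Proof. by rewrite !dotmxE; apply: cauchy_schwarz_sum. Qed.

Lemma gram_row_mx (R : comNzRingType) k m (B : 'M[R]_(k, m)) (c : 'cV_k) :
  row_mx B c *m (row_mx B c)^T = B *m B^T + c *m c^T.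
Proof. by rewrite tr_row_mx mul_row_col. Qed.

Lemma gram_sum_col (R : comNzRingType) k n (B : 'M[R]_(k, n)) :
  B *m B^T = \sum_j col j B *m (col j B)^T.
Proof.
apply/matrixP => a b; rewrite !mxE summxE; apply: eq_bigr => j _.
by rewrite !mxE big_ord1 !mxE.
Qed.

Lemma det_gram_le_add_outer (R : realFieldType) k m (B : 'M[R]_(k, m)) (c : 'cV_k) :
  0 < \det (B *m B^T) -> \det (B *m B^T) <= \det (B *m B^T + c *m c^T).
Proof.
set G := B *m B^T => Gpos; have uG : G \in unitmx by rewrite unitmxE unitfE gt_eqF.
rewrite det_add_outer // ler_pMr // lerDl.
have -> : c^T *m invmx G *m c = (B^T *m (invmx G *m c))^T *m (B^T *m (invmx G *m c)).
  rewrite !trmx_mul trmxK trmx_inv [G^T]trmx_mul trmxK -/G.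
  by rewrite !mulmxA -(mulmxA _ B) -/G mulmxK.
exact: dotmx_ge0.
Qed.

Lemma det_gram_le_add_sum_outer (R : realFieldType) k m (B : 'M[R]_(k, m)) (I : Type)
    (r : seq I) (P : pred I) (c : I -> 'cV_k) :
  0 < \det (B *m B^T) ->
  \det (B *m B^T) <= \det (B *m B^T + \sum_(j <- r | P j) c j *m (c j)^T).
Proof.
(* [B B^T + c c^T] is the Gram matrix of [row_mx B c], so the induction stays
   among Gram matrices. *)
elim: r m B => [|x r IHr] m B Gpos; first by rewrite big_nil addr0.
rewrite big_cons; case: (P x); last exact: IHr.
have le1 := det_gram_le_add_outer (c x) Gpos.
rewrite addrA -gram_row_mx; apply: (le_trans le1); rewrite -gram_row_mx.
by apply: IHr; rewrite gram_row_mx (lt_le_trans Gpos).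
Qed.

Lemma sqr_det_colsub_le_det_gram (R : realFieldType) k n (B : 'M[R]_(k, n))
    (J : 'I_k -> 'I_n) :
  injective J -> colsub J B \in unitmx -> \det (colsub J B) ^+ 2 <= \det (B *m B^T).
Proof.
move=> injJ uJ; have -> : \det (colsub J B) ^+ 2 = \det (colsub J B *m (colsub J B)^T).
  by rewrite det_mulmx det_tr expr2.
have -> : B *m B^T = colsub J B *m (colsub J B)^T
                     + \sum_(j | j \notin [set J i | i in 'I_k]) col j B *m (col j B)^T.
  rewrite gram_sum_col (bigID (mem [set J i | i in 'I_k])) /=; congr (_ + _).
  rewrite big_imset /=; last by move=> i j _ _; apply: injJ.
  by rewrite gram_sum_col; apply: eq_bigr => i _; rewrite col_colsub.
apply: det_gram_le_add_sum_outer.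
by rewrite det_mulmx det_tr -expr2 exprn_even_gt0 //= -unitfE -unitmxE.
Qed.

Lemma det_gram_gt0 (R : realFieldType) k n (B : 'M[R]_(k, n)) :
  row_free B -> 0 < \det (B *m B^T).
Proof.
move=> /row_free_colsub_unit[J injJ uJ].
apply: lt_le_trans (sqr_det_colsub_le_det_gram injJ uJ).
by rewrite exprn_even_gt0 //= -unitfE -unitmxE.
Qed.

Lemma gram_mul_1_sub_delta (R : comNzRingType) k n (B : 'M[R]_(k, n)) (j : 'I_n) :
  (B *m (1%:M - delta_mx j j)) *m (B *m (1%:M - delta_mx j j))^T
  = B *m B^T - col j B *m (col j B)^T.
Proof.
have idem : (1%:M - delta_mx j j) *m (1%:M - delta_mx j j)^T
            = 1%:M - delta_mx j j :> 'M[R]_n.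
  rewrite linearB /= trmx1 trmx_delta mulmxBl mul1mx mulmxBr mulmx1 mul_delta_mx.
  by rewrite subrr subr0.
rewrite trmx_mul -mulmxA (mulmxA (1%:M - _)) idem mulmxBl mul1mx mulmxBr.
by rewrite colE trmx_mul trmx_delta -mulmxA (mulmxA (delta_mx j 0)) mul_delta_mx.
Qed.

Lemma normr_det_le (R : realDomainType) k (X : 'M[R]_k) (m : R) :
  (forall a b, `|X a b| <= m) -> `|\det X| <= k`!%:R * m ^+ k.
Proof.
move=> Xm; apply: le_trans (ler_norm_sum _ _ _) _.
have -> : k`!%:R * m ^+ k = \sum_(s : 'S_k) m ^+ k.
  by rewrite sumr_const card_Sn mulr_natl.
apply: ler_sum => s _; rewrite normrM normrX normrN1 expr1n mul1r normr_prod.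
have -> : m ^+ k = \prod_(i < k) m by rewrite prodr_const card_ord.
by apply: ler_prod => i _; rewrite normr_ge0 Xm.
Qed.

Lemma det_gram_le (R : realDomainType) k n (B : 'M[R]_(k, n)) (P : R) :
  (forall i j, `|B i j| <= P) -> \det (B *m B^T) <= k`!%:R * (n%:R * P ^+ 2) ^+ k.
Proof.
move=> BP; apply: le_trans (ler_norm _) (normr_det_le _) => a b.
have -> : n%:R * P ^+ 2 = \sum_(j < n) P ^+ 2 by rewrite sumr_const card_ord mulr_natl.
rewrite mxE; apply: le_trans (ler_norm_sum _ _ _) (ler_sum _ _) => j _.
rewrite mxE normrM expr2 ler_pM //; exact: le_trans (BP a j).
Qed.

(* When [M^T v = 0] the division by zero makes the ratio 0. *)
Definition leverage_ratio (R : realFieldType) r n (M : 'M[R]_(r, n)) (j : 'I_n)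
    (v : 'cV_r) : R :=
  ((v^T *m col j M) 0 0) ^+ 2 / (((M^T *m v)^T *m (M^T *m v)) 0 0).

Lemma leverage_score_le (R : realType) r n (M : 'M[R]_(r, n)) (j : 'I_n) (b : R) :
  0 <= b -> (forall v, M^T *m v != 0 -> leverage_ratio M j v <= b) ->
  leverage_score M j <= b.
Proof.
move=> b0 ratio_le; have [[_ [v [Mv0 _]]]|noratio] := pselect (exists x : R,
  exists v : 'cV_r, M^T *m v != 0 /\ x = leverage_ratio M j v).
  apply: ge_sup; first by exists (leverage_ratio M j v), v.
  by move=> _ [w [Mw0 ->]]; apply: ratio_le.
rewrite /leverage_score (_ : [set _ | _]%classic = set0) ?sup0 //.
by apply/seteqP; split => // x [v vx]; apply: noratio; exists x, v.
Qed.

Lemma leverage_score_mx0 (R : realType) r n (j : 'I_n) (b : R) :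
  0 <= b -> leverage_score (0 : 'M[R]_(r, n)) j <= b.
Proof. by move=> b0; apply: leverage_score_le => // v; rewrite trmx0 mul0mx eqxx. Qed.

Lemma leverage_ratio_le_gram (R : realFieldType) r n k (M : 'M[R]_(r, n))
    (B : 'M_(k, n)) (j : 'I_n) (v : 'cV_r) :
  (M <= B)%MS -> B *m B^T \in unitmx ->
  leverage_ratio M j v <= ((col j B)^T *m invmx (B *m B^T) *m col j B) 0 0.
Proof.
(* Writing [v^T M = D B], the numerator is [<p, q>^2] with [p = M^T v] and
   [q = B^T G^-1 a], and [|q|^2 = a^T G^-1 a]. *)
set G := B *m B^T => sMB uG.
have /submxP[D vMD] : (v^T *m M <= B)%MS by apply: submx_trans (submxMl _ _) sMB.
set p := B^T *m D^T; set q := B^T *m (invmx G *m col j B).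
have Mv : M^T *m v = p by rewrite /p -[v]trmxK -trmx_mul vMD trmx_mul.
have vMj : v^T *m col j M = p^T *m q.
  rewrite colE mulmxA vMD /p /q trmx_mul !trmxK !mulmxA.
  by rewrite -[in RHS](mulmxA D B) -/G mulmxK // colE mulmxA.
have qq : q^T *m q = (col j B)^T *m invmx G *m col j B.
  rewrite /q !trmx_mul trmxK trmx_inv [G^T]trmx_mul trmxK -/G.
  by rewrite !mulmxA -(mulmxA _ B) -/G mulmxK.
rewrite /leverage_ratio Mv vMj -qq.
have [pp0|pp_neq0] := eqVneq ((p^T *m p) 0 0) 0.
  by rewrite pp0 invr0 mulr0 dotmx_ge0.
rewrite ler_pdivrMr ?lt_def ?pp_neq0 ?dotmx_ge0 // mulrC; exact: cauchy_schwarz_mx.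
Qed.

Lemma det_gram_zero_col_le (R : realFieldType) r n k (M : 'M[R]_(r, n))
    (I : 'I_k -> 'I_r) (j : 'I_n) (v : 'cV_r) (t : R) :
  (\rank M <= k)%N -> row_free (rowsub I M) -> t < leverage_ratio M j v ->
  \det (rowsub I (M *m (1%:M - delta_mx j j))
        *m (rowsub I (M *m (1%:M - delta_mx j j)))^T)
  <= \det (rowsub I M *m (rowsub I M)^T) * (1 - t).
Proof.
move=> rankM freeI t_lt; set B := rowsub I M; set G := B *m B^T.
have Gpos : 0 < \det G := det_gram_gt0 freeI.
have uG : G \in unitmx by rewrite unitmxE unitfE gt_eqF.
rewrite -mul_rowsub_mx gram_mul_1_sub_delta -mulNmx det_add_outer // -/G.
rewrite ler_pM2l // lerD2l mulmxN mxE lerN2; apply/ltW/(lt_le_trans t_lt).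
by apply: leverage_ratio_le_gram => //; apply: submx_rowsub_row_free.
Qed.

Lemma zero_colsU1 (R : realType) r n (A : 'M[R]_(r, n)) (S : {set 'I_n}) (j : 'I_n) :
  zero_cols A (j |: S) = zero_cols A S *m (1%:M - delta_mx j j).
Proof.
apply/matrixP => a b; rewrite mulmxBr mulmx1 !mxE in_setU1 (bigD1 b) //= big1.
  rewrite !mxE addr0; case: (eqVneq b j) => [->|_] /=; last by rewrite mulr0 subr0.
  by rewrite mulr1 subrr.
by move=> c; rewrite !mxE; case: (c =P j) (b =P j) => [->|_] [->|_]; rewrite ?eqxx ?mulr0.
Qed.

Lemma det_gram_zero_cols_le (R : realType) r n (A : 'M[R]_(r, n)) (P : R) k
    (I : 'I_k -> 'I_r) (S : {set 'I_n}) :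
  (k <= r)%N -> (forall i j, `|A i j| <= P) -> 1 <= n%:R * P ^+ 2 ->
  \det (rowsub I (zero_cols A S) *m (rowsub I (zero_cols A S))^T)
    <= r`!%:R * (n%:R * P ^+ 2) ^+ r.
Proof.
move=> k_le A_le nP_ge1; apply: le_trans (det_gram_le (P := P) _) _.
  move=> a b; rewrite !mxE; case: ifP => _ //.
  by rewrite normr0 (le_trans _ (A_le (I a) b)).
by rewrite ler_pM ?ler0n ?exprn_ge0 ?(le_trans ler01) ?ler_nat ?leq_fact ?ler_weXn2l.
Qed.

Lemma det_gram_zero_cols_ge (R : realType) r n (A : 'M[R]_(r, n)) (P : R) k
    (I : 'I_k -> 'I_r) (S : {set 'I_n}) :
  0 < P ->
  (forall k (f : 'I_k -> 'I_r) (g : 'I_k -> 'I_n),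
      subdet A f g = 0 \/ 1 / P <= `|subdet A f g|) ->
  row_free (rowsub I (zero_cols A S)) ->
  1 / P ^+ 2 <= \det (rowsub I (zero_cols A S) *m (rowsub I (zero_cols A S))^T).
Proof.
set B := rowsub I (zero_cols A S) => P_gt0 subdetA /row_free_colsub_unit[J injJ uJ].
apply: le_trans (sqr_det_colsub_le_det_gram injJ uJ).
have J_notin_S i : J i \notin S.
  apply/negP => JiS; move: uJ; rewrite unitmxE (expand_det_col _ i) big1 ?unitr0 //.
  by move=> a _; rewrite !mxE JiS mul0r.
have colsubE : colsub J B = mxsub I J A.
  by apply/matrixP => a b; rewrite !mxE (negbTE (J_notin_S b)).
rewrite colsubE in uJ *.
have [det0|] := subdetA k I J.
  by move: uJ; rewrite unitmxE unitfE -[\det _]/(subdet A I J) det0 eqxx.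
rewrite /subdet -(real_normK (num_real (\det _))) => le.
have -> : 1 / P ^+ 2 = (1 / P) ^+ 2 by rewrite expr_div_n expr1n.
by rewrite lerXn2r // nnegrE divr_ge0 // ltW.
Qed.

Section GreedyZeroing.

Variables (R : realType) (r n : nat) (A : 'M[R]_(r, n)) (s lo hi : R) (N : nat).

Local Notation gram_det I S :=
  (\det (rowsub I (zero_cols A S) *m (rowsub I (zero_cols A S))^T)).

Hypothesis s_ge1 : 1 <= s.
Hypothesis lo_le_gram_det : forall k (I : 'I_k -> 'I_r) S,
  row_free (rowsub I (zero_cols A S)) -> lo <= gram_det I S.
Hypothesis gram_det_le_hi : forall k (I : 'I_k -> 'I_r) S,
  (k <= r)%N -> gram_det I S <= hi.
Hypothesis hi_decay_lt_lo : hi * (1 - 1 / s) ^+ N < lo.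

Let inv_s_ge0 : 0 <= 1 / s.
Proof. by rewrite divr_ge0 // (le_trans ler01). Qed.

Let decay_ge0 : 0 <= 1 - 1 / s.
Proof. by rewrite subr_ge0 ler_pdivrMr ?mul1r // (lt_le_trans ltr01). Qed.

Definition low_leverage (S : {set 'I_n}) :=
  forall j, leverage_score (zero_cols A S) j <= 1 / s.

Lemma high_leverage_ratio S :
  ~ low_leverage S -> exists j v, 1 / s < leverage_ratio (zero_cols A S) j v.
Proof.
move=> not_low; apply: contra_notP not_low => no_ratio j.
apply: leverage_score_le => // v _.
by rewrite leNgt; apply/negP => gt; apply: no_ratio; exists j, v.
Qed.

Lemma greedy_phase k (I : 'I_k -> 'I_r) m S :
  (\rank (zero_cols A S) <= k)%N -> row_free (rowsub I (zero_cols A S)) ->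
  gram_det I S * (1 - 1 / s) ^+ m < lo ->
  exists2 S' : {set 'I_n}, (#|S'| <= #|S| + m)%N &
    low_leverage S' \/ (\rank (zero_cols A S') < k)%N.
Proof.
elim: m S => [|m IHm] S rankS freeS decay.
  by move: decay; rewrite expr0 mulr1 ltNge lo_le_gram_det.
have [low|/high_leverage_ratio[j [v ratio_gt]]] := pselect (low_leverage S).
  by exists S; [rewrite leq_addr | left].
have card_jS : (#|j |: S| <= #|S| + 1)%N by rewrite cardsU1 addnC leq_add2l leq_b1.
have rank_jS : (\rank (zero_cols A (j |: S)) <= k)%N.
  by rewrite zero_colsU1; apply: leq_trans (mxrankM_maxl _ _) rankS.
have [free_jS|not_free_jS] := boolP (row_free (rowsub I (zero_cols A (j |: S)))).
  have [|S' card_S' low_S'] := IHm (j |: S) rank_jS free_jS.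
    apply: le_lt_trans decay; rewrite exprS mulrA ler_wpM2r ?exprn_ge0 // zero_colsU1.
    exact: det_gram_zero_col_le rankS freeS ratio_gt.
  by exists S' => //; rewrite (leq_trans card_S') // addnS -addn1 addnAC leq_add2r.
exists (j |: S); first by rewrite (leq_trans card_jS) // leq_add2l.
right; rewrite zero_colsU1 in not_free_jS *.
exact: rank_rowsub_not_free (submx_rowsub_row_free rankS freeS) not_free_jS.
Qed.

Lemma greedy_zeroing k S :
  (\rank (zero_cols A S) <= k)%N ->
  exists2 S' : {set 'I_n}, (#|S'| <= #|S| + k * N)%N & low_leverage S'.
Proof.
elim: k S => [|k IHk] S rankS.
  exists S => [|j]; first by rewrite mul0n addn0.
  move: rankS; rewrite leqn0 mxrank_eq0 => /eqP->.
  exact: leverage_score_mx0.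
set M := zero_cols A S; have freeI := maxrowsub_free M.
have [|S1 card_S1 [low_S1|rank_S1]] := greedy_phase (m := N) (leqnn _) freeI.
- apply: le_lt_trans hi_decay_lt_lo; rewrite ler_wpM2r ?exprn_ge0 //.
  exact/gram_det_le_hi/rank_leq_row.
- by exists S1 => //; rewrite (leq_trans card_S1) // mulSn addnA leq_addr.
have [|S2 card_S2 low_S2] := IHk S1; first by rewrite -ltnS (leq_trans rank_S1).
by exists S2 => //; rewrite (leq_trans card_S2) // mulSn addnA leq_add2r.
Qed.

End GreedyZeroing.

Lemma leq_fact_expn n : (n`! <= n ^ n)%N.
Proof.
elim: n => // n IHn; rewrite factS expnS leq_mul2l (leq_trans IHn) ?orbT //.
by case: n {IHn} => // n; rewrite leq_exp2r.
Qed.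

Lemma gram_bound_leq_expn K r n : (0 < K)%N -> (0 < r)%N ->
  (r`! * (n * (K * r ^ K) ^ 2) ^ r * (K * r ^ K) ^ 2
   <= (K ^ 4 * (n * r) ^ (4 * K + 1)) ^ r)%N.
Proof.
move=> K_gt0 r_gt0; set P := (K * r ^ K)%N.
have P_gt0 : (0 < P)%N by rewrite muln_gt0 K_gt0 expn_gt0 r_gt0.
apply: (@leq_trans ((r * (n * P ^ 2) * P ^ 2) ^ r)).
  clearbody P; rewrite [X in (_ <= X)%N]expnMn [X in (_ <= X * _)%N]expnMn.
  rewrite leq_mul ?leq_mul ?leq_fact_expn //.
  by rewrite -{1}(expn1 (P ^ 2)) leq_pexp2l // expn_gt0 P_gt0.
rewrite leq_exp2r //.
have -> : (r * (n * P ^ 2) * P ^ 2 = K ^ 4 * (n * r ^ (4 * K + 1)))%N.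
  have -> : (4 * K = K * 2 + K * 2)%N by rewrite -mulnDr mulnC.
  by rewrite /P !expnD expn1 !expnMn -!expnM; ring.
rewrite leq_mul2l expnMn leq_mul ?orbT //.
by case: n => // n; rewrite -{1}(expn1 n.+1) leq_pexp2l // addn1.
Qed.

Lemma exprn_1_sub_inv_le_expR (R : realType) (s : R) N :
  1 <= s -> (1 - 1 / s) ^+ N <= expR (- (N%:R / s)).
Proof.
move=> s_ge1; have s_gt0 : 0 < s := lt_le_trans ltr01 s_ge1.
have -> : - (N%:R / s) = N%:R * - (1 / s) by rewrite mulrN mul1r.
rewrite expRM_natl lerXn2r ?nnegrE ?expR_ge0 ?subr_ge0 ?ler_pdivrMr ?mul1r //.
exact: expR_ge1Dx.
Qed.

Lemma gram_bound_decay_lt (R : realType) (K r n N : nat) (s : R) :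
  (0 < K)%N -> (0 < r)%N -> (0 < n)%N -> 1 <= s ->
  s * ((4 * K + 1)%:R * r%:R * (1 + ln (n%:R * r%:R))) < N%:R ->
  r`!%:R * (n%:R * (K%:R * r%:R ^+ K) ^+ 2) ^+ r * (1 - 1 / s) ^+ N
    < 1 / (K%:R * r%:R ^+ K) ^+ 2.
Proof.
move=> K_gt0 r_gt0 n_gt0 s_ge1 N_gt.
have s_gt0 : 0 < s := lt_le_trans ltr01 s_ge1.
set P : R := K%:R * r%:R ^+ K; set L := ln (n%:R * r%:R : R).
set X : R := (K ^ 4 * (n * r) ^ (4 * K + 1))%:R.
have P_gt0 : 0 < P by rewrite mulr_gt0 ?exprn_gt0 ?ltr0n.
have X_gt0 : 0 < X by rewrite ltr0n muln_gt0 !expn_gt0 K_gt0 muln_gt0 n_gt0 r_gt0.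
have lnX_le : ln X <= (4 * K + 1)%:R * (1 + L).
  have K_pos : 0 < K%:R :> R by rewrite ltr0n.
  have nr_pos : 0 < (n * r)%:R :> R by rewrite ltr0n muln_gt0 n_gt0.
  rewrite /X natrM !natrX lnM ?posrE ?exprn_gt0 //.
  rewrite (lnXn 4 K_pos) (lnXn _ nr_pos) natrM -/L.
  have lnK_le : ln K%:R *+ 4 <= (4 * K + 1)%:R :> R.
    by have := ln_sublinear K_pos; rewrite -mulr_natr natrD natrM; lra.
  by rewrite mulrDr mulr1 mulr_natl lerD.
have gram_le : r`!%:R * (n%:R * P ^+ 2) ^+ r * P ^+ 2 <= X ^+ r.
  by rewrite /P /X -!(natrX, natrM) ler_nat gram_bound_leq_expn.
rewrite ltr_pdivlMr ?exprn_gt0 // mulrAC.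
apply: le_lt_trans (ler_pM _ _ gram_le (exprn_1_sub_inv_le_expR N s_ge1)) _.
- by do ![apply: mulr_ge0 | apply: exprn_ge0 | apply: ler0n].
- by rewrite exprn_ge0 // subr_ge0 ler_pdivrMr ?mul1r.
rewrite -(lnK X_gt0) -expRM_natl -expRD expR_lt1 subr_lt0 ltr_pdivlMr //.
apply: le_lt_trans N_gt; rewrite mulrC ler_pM2l // mulrAC [X in _ <= X]mulrC.
by rewrite ler_pM2l ?ltr0n.
Qed.

Lemma ln_nat_ge0 (R : realType) m : 0 <= ln (m%:R : R).
Proof. by case: m => [|m]; [rewrite ln0 | rewrite ln_ge0 // ler1n]. Qed.

Lemma card_zeroed_le (R : realType) (K r n : nat) (s : R) :
  (0 < r)%N -> 1 <= s ->
  (r * (Num.truncn (s * ((4 * K + 1)%:R * r%:R * (1 + ln (n%:R * r%:R))))).+1)%:R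
    <= (4 * K + 2)%:R * r%:R ^+ 2 * s * (1 + ln (n%:R * r%:R)).
Proof.
move=> r_gt0 s_ge1; set L := ln _.
have L_ge0 : 0 <= L by rewrite /L -natrM ln_nat_ge0.
have a_ge1 : 1 <= s * (1 + L) by rewrite -[1]mulr1 ler_pM ?lerDl //; lra.
have x_ge1 : 1 <= r%:R :> R by rewrite ler1n.
set a := s * (1 + L) in a_ge1; set x := r%:R in x_ge1 *; set k := (4 * K + 1)%:R.
have -> : s * (k * x * (1 + L)) = k * x * a by rewrite /a; ring.
have -> : (4 * K + 2)%:R = k + 1 by rewrite /k natr1 -addnS.
have -> : (k + 1) * x ^+ 2 * s * (1 + L) = (k + 1) * x ^+ 2 * a by rewrite /a; ring.
have t_le : (Num.truncn (k * x * a))%:R <= k * x * a.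
  by rewrite truncn_le !mulr_ge0 ?ler0n //; lra.
have x_le : x <= x ^+ 2 * a.
  rewrite -[x in x <= _]mulr1 expr2 -mulrA ler_pM2l ?(lt_le_trans ltr01) //.
  by rewrite -[1]mulr1 ler_pM.
rewrite natrM -/x -natr1; nra.
Qed.

Theorem mainTheorem14 :
  forall K : nat, exists C : nat,
  forall (R : realType) (r n : nat) (A : 'M[R]_(r, n)) (s : R),
    (1 <= r)%N ->
    (forall i j, A i j != 0 -> `|A i j| <= K%:R * r%:R ^+ K) ->
    (forall (k : nat) (f : 'I_k -> 'I_r) (g : 'I_k -> 'I_n),
        subdet A f g = 0 \/ 1 / (K%:R * r%:R ^+ K) <= `|subdet A f g|) ->
    1 <= s ->
    exists S : {set 'I_n},
      (#|S|%:R <= C%:R * r%:R ^+ 2 * s * (1 + ln (n%:R * r%:R))) /\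
      (forall j : 'I_n, leverage_score (zero_cols A S) j <= 1 / s).
Proof.
move=> K; exists (4 * K + 2)%N => R r n A s r_gt0 A_le subdetA s_ge1.
have s_gt0 : 0 < s := lt_le_trans ltr01 s_ge1.
have bound_ge0 : 0 <= (4 * K + 2)%:R * r%:R ^+ 2 * s * (1 + ln (n%:R * r%:R)).
  by rewrite !mulr_ge0 ?exprn_ge0 ?ler0n ?(ltW s_gt0) // addr_ge0 // -natrM ln_nat_ge0.
have [n0|n_gt0] := posnP n.
  exists finset.set0; split=> [|j]; first by rewrite cards0.
  by have := ltn_ord j; rewrite {2}n0.
have [K0|K_gt0] := posnP K.
  have A0 : zero_cols A finset.set0 = 0.
    apply/matrixP => i j; rewrite !mxE finset.in_set0.
    have [//|/A_le] := eqVneq (A i j) 0.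
    by rewrite K0 mul0r normr_le0 => /eqP.
  exists finset.set0; split=> [|j]; first by rewrite cards0.
  by rewrite A0 leverage_score_mx0 // divr_ge0 // ltW.
set P := K%:R * r%:R ^+ K in A_le subdetA.
have P_ge1 : 1 <= P by rewrite mulr_ege1 ?exprn_ege1 ?ler1n.
have [| | |S card_S low_S] := greedy_zeroing (lo := 1 / P ^+ 2)
  (hi := r`!%:R * (n%:R * P ^+ 2) ^+ r)
  (N := (Num.truncn (s * ((4 * K + 1)%:R * r%:R * (1 + ln (n%:R * r%:R))))).+1)
  s_ge1 _ _ _ (rank_leq_row (zero_cols A finset.set0)).
- by move=> k I S; apply: det_gram_zero_cols_ge; rewrite // (lt_le_trans ltr01).
- move=> k I S k_le; apply: det_gram_zero_cols_le => // [i j|].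
    by have [->|/A_le] := eqVneq (A i j) 0; rewrite ?normr0 // (le_trans ler01).
  by rewrite mulr_ege1 ?ler1n // exprn_ege1.
- exact: gram_bound_decay_lt K_gt0 r_gt0 n_gt0 s_ge1 (truncnS_gt _).
exists S; split=> //; apply: le_trans (card_zeroed_le K n r_gt0 s_ge1).
by rewrite ler_nat; rewrite cards0 add0n in card_S.
Qed.
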